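(* For every integer $n\ge 1$ and every real (or complex) number $t$, $$\det\bigl(C_{n,t}\cdot_L D_{n,t}\bigr) \;=\; -\bigl(F_{n+1}t+F_n\bigr)\bigl(F_{2n-1}t+F_{2n}\bigr)\;=\;-F_{n+1}F_{2n-1}\,t^{2}-\bigl(F_{n+1}F_{2n}+F_{n}F_{2n-1}\bigr)t-F_{n}F_{2n}.$$ In particular the first terms are $-t^2-2t-1,\ -4t^2-8t-3,\ -15t^2-34t-16$ for $n=1,2,3$.
   Context: $F_k$ denotes the Fibonacci numbers: $F_0=0$, $F_1=F_2=1$, $F_k=F_{k-1}+F_{k-2}$. Lorentz matrix product: for $A=[a_{ij}]$ of size $m\times n$ and $B=[b_{jk}]$ of size $n\times p$, $A\cdot_L B$ is the $m\times p$ matrix with $(i,k)$ entry $-a_{i1}b_{1k}+\sum_{j=2}^{n}a_{ij}b_{jk}$ (equivalently $A\cdot_L B=A\,\mathrm{diag}(-1,1,\dots,1)\,B$). $C_{n,t}$ is the $n\times n$ matrix with entries $c_{ij}$: $c_{ii}=2$ for $1\le i\le n-1$, $c_{nn}=t+1$, $c_{i,i+1}=1$ for $1\le i\le n-1$, $c_{ij}=1$ for all $i>j$, and $c_{ij}=0$ for $j>i+1$. (For $n=1$, $C_{1,t}=(t+1)$.) $D_{n,t}$ is the $n\times n$ matrix obtained from $C_{n,t}$ by replacing every superdiagonal entry $1$ by $-1$: entries $d_{ii}=2$ for $i\le n-1$, $d_{nn}=t+1$, $d_{i,i+1}=-1$, $d_{ij}=1$ for $i>j$, $d_{ij}=0$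 for $j>i+1$. (For $n=1$, $D_{1,t}=(t+1)$.) *)

From mathcomp Require Import all_boot all_order all_algebra.
Set Implicit Arguments. Unset Strict Implicit. Unset Printing Implicit Defensive.
Import GRing.Theory.
Local Open Scope ring_scope.

Fixpoint fib (k : nat) : nat :=
  match k with
  | 0 => 0
  | 1 => 1
  | (k'.+1 as k1).+1 => fib k1 + fib k'
  end.

Definition lorentz_mul (R : pzRingType) m n p (A : 'M[R]_(m, n)) (B : 'M[R]_(n, p))
  : 'M[R]_(m, p) :=
  A *m diag_mx (\row_(j < n) (if val j == 0 then -1 else 1)) *m B.

(* C_{n,t} with 0-based indices i,j < n (paper's i = i+1):
   diagonal 2 except last entry t+1; superdiagonal 1; strictly lower part 1;
   above superdiagonal 0. *)
Definition Cmat (R : pzRingType) (n : nat) (t : R) : 'M[R]_n :=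
  \matrix_(i < n, j < n)
    if i == j then (if val i == n.-1 then t + 1 else 2)
    else if val j == (val i).+1 then 1
    else if (val j < val i)%N then 1 else 0.

Definition Dmat (R : pzRingType) (n : nat) (t : R) : 'M[R]_n :=
  \matrix_(i < n, j < n)
    if i == j then (if val i == n.-1 then t + 1 else 2)
    else if val j == (val i).+1 then -1
    else if (val j < val i)%N then 1 else 0.

From mathcomp Require Import all_boot all_order all_algebra.
From mathcomp Require Import ring zify.
Import GRing.Theory.
Set Implicit Arguments. Unset Strict Implicit. Unset Printing Implicit Defensive.
Local Open Scope ring_scope.

(* Since diag(-1,1,...,1) has determinant -1, det (C .L D) = - det C * det D.
   Both C_{n,t} and D_{n,t} belong to the family [lhess_mx n s a t] of lower
   Hessenberg matrices with superdiagonal s and first diagonal entry a.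
   Expanding along the first row gives
   det X_{m+3}(a) = a det X_{m+2}(2) - s det X_{m+2}(1), so det X is affine in a,
   and for s = 1 (resp. s = -1) its two coefficients satisfy the Fibonacci
   recurrence with step 1 (resp. step 2), which yields F_{n+1} t + F_n and
   F_{2n-1} t + F_{2n}. *)

Lemma fibSS k : fib k.+2 = (fib k.+1 + fib k)%N.
Proof. by []. Qed.

Lemma det_lorentz_mul (R : comNzRingType) n (A B : 'M[R]_n.+1) :
  \det (lorentz_mul A B) = - (\det A * \det B).
Proof.
rewrite /lorentz_mul !det_mulmx det_diag big_ord_recl big1 => [|i _]; last first.
  by rewrite mxE.
by rewrite mxE mulr1 mulrN1 mulNr.
Qed.

(* For m = 1 the last-entry rule wins: [lhess_mx 1 s a t] is the 1x1 matrix t + 1. *)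
Definition lhess_mx (R : pzRingType) (m : nat) (s a t : R) : 'M[R]_m :=
  \matrix_(i < m, j < m)
    if i == j then (if val i == m.-1 then t + 1 else if val i == 0%N then a else 2)
    else if val j == (val i).+1 then s
    else if (val j < val i)%N then 1 else 0.

Section LowerHessenberg.

Variable R : comNzRingType.
Implicit Types s a t : R.

Lemma Cmat_lhess n t : Cmat n t = lhess_mx n 1 2 t.
Proof. by apply/matrixP => i j; rewrite !mxE; case: (val i == 0%N). Qed.

Lemma Dmat_lhess n t : Dmat n t = lhess_mx n (-1) 2 t.
Proof. by apply/matrixP => i j; rewrite !mxE; case: (val i == 0%N). Qed.

Lemma det_lhess1 s a t : \det (lhess_mx 1 s a t) = t + 1.
Proof. by rewrite det_mx11 mxE. Qed.

Lemma lhess_row0 m s a t (j : 'I_m.+2) :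
  lhess_mx m.+2 s a t 0 j = if val j == 0%N then a else if val j == 1%N then s else 0.
Proof. by rewrite mxE; case: j => [[|[|j]] ?]. Qed.

Lemma expand_det_lhess m s a t :
  \det (lhess_mx m.+2 s a t) =
  a * \det (row' 0 (col' 0 (lhess_mx m.+2 s a t)))
  - s * \det (row' 0 (col' 1 (lhess_mx m.+2 s a t))).
Proof.
rewrite (expand_det_row _ 0) big_ord_recl big_ord_recl big1 => [|i _]; last first.
  by rewrite lhess_row0 mul0r.
rewrite addr0 !lhess_row0 /= /cofactor /= expr0 mul1r expr1 mulN1r mulrN.
by rewrite /bump.
Qed.

Lemma lhess_minor00 m s a t :
  row' 0 (col' 0 (lhess_mx m.+3 s a t)) = lhess_mx m.+2 s 2 t.
Proof.
apply/matrixP => -[i Hi] [j Hj]; rewrite !mxE -!val_eqE /= /bump /= !add1n !eqSS ltnS.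
by case: (i == 0%N).
Qed.

Lemma lhess_minor01 m s a t :
  row' 0 (col' 1 (lhess_mx m.+3 s a t)) = lhess_mx m.+2 s 1 t.
Proof.
apply/matrixP => -[i Hi] [[|j] Hj]; rewrite !mxE -!val_eqE /= /bump /=.
  by case: i Hi.
by rewrite !eqSS ltnS; case: i Hi.
Qed.

Lemma det_lhess_rec m s a t :
  \det (lhess_mx m.+3 s a t) =
  a * \det (lhess_mx m.+2 s 2 t) - s * \det (lhess_mx m.+2 s 1 t).
Proof. by rewrite expand_det_lhess lhess_minor00 lhess_minor01. Qed.

Lemma det_lhess2 s a t : \det (lhess_mx 2 s a t) = a * (t + 1) - s.
Proof. by rewrite expand_det_lhess !det_mx11 !mxE /= mulr1. Qed.

Lemma det_lhess_pos m a t :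
  \det (lhess_mx m.+2 1 a t) =
  (a - 1) * ((fib m.+2)%:R * t + (fib m.+1)%:R) + (fib m.+1)%:R * t + (fib m)%:R.
Proof.
elim: m a => [|m IH] a; first by rewrite det_lhess2 /=; ring.
by rewrite det_lhess_rec !IH !fibSS !natrD; ring.
Qed.

Lemma det_lhess_neg m a t :
  \det (lhess_mx m.+2 (-1) a t) =
  (a - 1) * ((fib (2 * m).+1)%:R * t + (fib (2 * m).+2)%:R)
  + (fib (2 * m).+2)%:R * t + (fib (2 * m).+3)%:R.
Proof.
elim: m a => [|m IH] a; first by rewrite det_lhess2 /=; ring.
have -> : (2 * m.+1 = (2 * m).+2)%N by lia.
by rewrite det_lhess_rec !IH !fibSS !natrD; ring.
Qed.

End LowerHessenberg.

Theorem mainTheorem1 (R : comNzRingType) (n : nat) (t : R) :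
  (1 <= n)%N ->
  \det (lorentz_mul (Cmat n t) (Dmat n t))
  = - (((fib n.+1)%:R * t + (fib n)%:R) * ((fib (2 * n).-1)%:R * t + (fib (2 * n))%:R)).
Proof.
case: n => [//|[|m]] _; rewrite det_lorentz_mul Cmat_lhess Dmat_lhess.
  by rewrite !det_lhess1 /=; ring.
have -> : ((2 * m.+2).-1 = (2 * m).+3)%N by lia.
have -> : (2 * m.+2 = (2 * m).+4)%N by lia.
rewrite det_lhess_pos det_lhess_neg !fibSS !natrD; ring.
Qed.
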